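(* For every $0\le j\le n$, every player $i\in[n]$ and every transition $\mathbf e\in\mathcal E_{\ge j}$, we have $\lambda^{j^*}_i(\mathbf e)\le|V|\cdot\kappa$, where $\kappa=\max_{e\in E}\ell_e(n)$.
   Context: Dynamic NCG $(\mathcal A,n)$: arena $\mathcal A=(V,E,\mathsf{src},\mathsf{tgt})$, $V$ finite, $E$ a partial function from $V\times V$ to non-decreasing piecewise-affine functions $\mathbb N\to\mathbb N$ (edge $e$ has cost $\ell_e$); $\mathsf{tgt}$ has only a self-loop of cost $0$ and is reachable from all states; players $[n]$. Configurations are maps $[n]\to V$; $c_{\mathsf{tgt}}$ maps all to $\mathsf{tgt}$. A move vector $(e_i)_i$ from $c$ gives the transition $(c,w,c')$, $c'(i)$ the target of $e_i$, $w(i)=\ell_{e_i}(u_i)$ with $u_i=|\{l:e_l=e_i\}|$; $\mathrm{cost}_i(c,c')=w(i)$; $T$ is the set of transitions; $c\Rightarrow c'$ means $(c,w,c')\in T$. For a path $\rho=(t_k)$, $\rho_{\ge k}$ is its suffix from $t_k$ and $\mathrm{cost}_i(\rho)$ the total payment of $i$. $\mathrm{dev}_i(c,c')=\{c''\mid c\Rightarrow c'',\ c''(l)=c'(l)\ \forall l\ne i\}$. $X_m$: configurations with exactly $m$ players at $\mathsf{tgt}$; $X_{\ge m}=\bigcup_{m'\ge m}X_{m'}$; $\mathcal E_m$, $\mathcal E_{\ge m}$: transitions $(c,w,c')$ with $c\in X_m$, resp. $c\in X_{\ge m}$. For $\lambda=(\lambda_i)$, $\lambda_i:\mathcal E_{\ge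 m}\to\mathbb N\cup\{\pm\infty\}$, and $c\in X_{\ge m}$, $\Lambda_\lambda(c)$ is the set of paths $\rho=(t_k)$ from $c$ visiting $c_{\mathsf{tgt}}$ with $\mathrm{cost}_i(\rho_{\ge k})\le\lambda_i(t_k)$ for all $i,k$. Define $\lambda^{n^*}_i(c_{\mathsf{tgt}},0^n,c_{\mathsf{tgt}})=0$ (note $\mathcal E_{\ge n}$ consists only of the self-loop on $c_{\mathsf{tgt}}$). For $j<n$ the $\lambda^{j^*}$-building functions $\mu^k_i:\mathcal E_{\ge j}\to\mathbb N\cup\{\pm\infty\}$ are: $\mu^k_i=\lambda^{(j+1)^*}_i$ on $\mathcal E_{\ge j+1}$; for $\mathbf e=(c,w,c')\in\mathcal E_j$, $\mu^0_i(\mathbf e)=0$ if $c(i)=\mathsf{tgt}$ else $+\infty$; for $k>0$, $\mu^k_i(\mathbf e)=0$ if $c(i)=\mathsf{tgt}$, otherwise $\min_{c''\in\mathrm{dev}_i(c,c')}\sup_{\rho\in\Lambda_{\mu^{k-1}}(c'')}(\mathrm{cost}_i(c,c'')+\mathrm{cost}_i(\rho))$ if $\Lambda_{\mu^{k-1}}(\tilde c)\ne\emptyset$ for all $(c,\tilde w,\tilde c)\in T$, and $-\infty$ otherwise. $\lambda^{j^*}_i$ is the pointwise limit of $(\mu^k_i)_k$ as $k\to\infty$. *)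

From HB Require Import structures.
From mathcomp Require Import all_boot all_order all_algebra.
From mathcomp Require Import all_classical all_reals all_analysis.
Set Implicit Arguments. Unset Strict Implicit. Unset Printing Implicit Defensive.
Import Order.TTheory GRing.Theory Num.Theory.
Local Open Scope classical_set_scope.
Local Open Scope ring_scope.

Record arena := Arena {
  vert : finType;
  edge : vert -> vert -> option (nat -> nat);
  asrc : vert;
  atgt : vert }.

(* Piecewise-affine function N -> N (finitely many affine pieces); on N this is
   the same as: affine (with integer coefficients) from some point on. *)
Definition piecewise_affine (f : nat -> nat) : Prop :=
  exists (N : nat) (a b : int), forall x, (N <= x)%N -> (f x)%:Z = a * x%:Z + b.

Definition nondecr (f : nat -> nat) : Prop := forall x y, (x <= y)%N -> (f x <= f y)%N.

Definition is_edge (A : arena) (u v : vert A) : bool := isSome (edge u v).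

Definition wf_arena (A : arena) : Prop :=
  (forall (u v : vert A) f, edge u v = Some f -> nondecr f /\ piecewise_affine f) /\
  (forall v, is_edge (atgt A) v -> v = atgt A) /\
  edge (atgt A) (atgt A) = Some (fun _ => 0%N) /\
  (forall v, connect (@is_edge A) v (atgt A)).

Section NCG.
Variables (R : realType) (A : arena) (n : nat).
Local Notation V := (vert A).
Local Notation tgt := (atgt A).

Definition config := {ffun 'I_n -> V}.

(* cost function of edge (u,v) (irrelevant default if not an edge) *)
Definition ell (u v : V) : nat -> nat := odflt (fun _ => 0%N) (edge u v).

Definition trans (c c' : config) : bool := [forall i, is_edge (c i) (c' i)].

Definition load (c c' : config) (i : 'I_n) : nat :=
  #|[set l | (c l, c' l) == (c i, c' i)]|.

Definition cost (c c' : config) (i : 'I_n) : nat := ell (c i) (c' i) (load c c' i).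

Definition ntgt (c : config) : nat := #|[set i | c i == tgt]|.

Definition ctgt : config := [ffun _ => tgt].

Definition dev (i : 'I_n) (c c' : config) : set config :=
  [set c'' | trans c c'' /\ forall l, l != i -> c'' l = c' l].

(* A path is given by its sequence of configurations rho 0, rho 1, ...;
   its k-th transition is (rho k, rho k.+1).  cost_i(rho_{>=k}): *)
Definition pcost (i : 'I_n) (rho : nat -> config) (k : nat) : \bar R :=
  ereal_sup (range (fun N => ((\sum_(k <= m < N) cost (rho m) (rho m.+1) i)%N%:R)%:E)).

Definition Lambda (mu : 'I_n -> config -> config -> \bar R) (c : config)
  : set (nat -> config) :=
  [set rho | rho 0%N = c /\ (forall k, trans (rho k) (rho k.+1)) /\
             (exists k, rho k = ctgt) /\
             (forall i k, (pcost i rho k <= mu i (rho k) (rho k.+1))%E)].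

(* lambda^{j*}-building functions, given lamnext = lambda^{(j+1)*} *)
Definition mu0 (j : nat) (lamnext : 'I_n -> config -> config -> \bar R)
  : 'I_n -> config -> config -> \bar R :=
  fun i c c' => if (j.+1 <= ntgt c)%N then lamnext i c c'
                else if c i == tgt then 0%E else +oo%E.

Definition mu_step (j : nat) (lamnext prev : 'I_n -> config -> config -> \bar R)
  : 'I_n -> config -> config -> \bar R :=
  fun i c c' =>
    if (j.+1 <= ntgt c)%N then lamnext i c c'
    else if c i == tgt then 0%E
    else if `[< forall c2, trans c c2 -> Lambda prev c2 !=set0 >] then
      ereal_inf [set ereal_sup [set ((cost c c2 i)%:R%:E + pcost i rho 0%N)%E
                                 | rho in Lambda prev c2]
                | c2 in dev i c c']
    else -oo%E.

Definition mu (j : nat) (lamnext : 'I_n -> config -> config -> \bar R) (k : nat) :=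
  iter k (mu_step j lamnext) (mu0 j lamnext).

Definition lamstep (j : nat) (lamnext : 'I_n -> config -> config -> \bar R)
  : 'I_n -> config -> config -> \bar R :=
  fun i c c' => limn (fun k => mu j lamnext k i c c').

(* lamaux d = lambda^{(n-d)*} *)
Fixpoint lamaux (d : nat) : 'I_n -> config -> config -> \bar R :=
  match d with
  | 0%N => fun _ _ _ => 0%E
  | d'.+1 => lamstep (n - d'.+1) (lamaux d')
  end.

Definition lamstar (j : nat) := lamaux (n - j).

Definition kappa : nat := \max_(u : V) \max_(v : V) (if edge u v is Some f then f n else 0%N).

End NCG.

From HB Require Import structures.
From mathcomp Require Import all_boot all_order all_algebra.
From mathcomp Require Import all_classical all_reals all_analysis.
Import Order.TTheory GRing.Theory Num.Theory.
Local Open Scope classical_set_scope.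
Local Open Scope ring_scope.

(* A player at vertex v who is not yet at tgt can always deviate along the
   first edge of a shortest path to tgt; such a path has m < |V| edges, and
   each edge costs at most kappa because loads never exceed n and costs are
   non-decreasing.  By induction on k, mu^k_i(e) <= m * kappa whenever m <= k:
   every path admitted by mu^(k-1) after the deviation costs i at most
   mu^(k-1) <= (m-1) * kappa.  Since (mu^k)_k is non-increasing, its limit is
   below mu^m, and this holds at every level j. *)

Lemma connect_short_path {T : finType} {e : rel T} {x y : T} :
  connect e x y -> exists2 p, path e x p & last x p = y /\ (size p < #|T|)%N.
Proof.
case/connectP=> p0 /shortenP[p e_p uniq_p _] ->; exists p => //; split=> //.
by rewrite -ltnS -[(size p).+1]/(size (x :: p)) -(card_uniqP uniq_p) ltnS max_card.
Qed.

Section LambdaBound.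
Variables (R : realType) (A : arena) (n : nat).
Local Notation V := (vert A).
Local Notation tgt := (atgt A).
Local Notation config := (config A n).
Local Notation F := ('I_n -> config -> config -> \bar R).
Local Notation bound m := (((m * kappa A n)%N%:R)%:E : \bar R).

Hypothesis nondecr_edges : forall (u v : V) f, edge u v = Some f -> nondecr f.

Lemma cost_le_kappa (c c' : config) (i : 'I_n) :
  is_edge (c i) (c' i) -> (cost c c' i <= kappa A n)%N.
Proof.
rewrite /is_edge /cost /ell /kappa; case Ecc': edge => [f|] //= _.
apply: (@leq_trans (f n)).
  by apply: nondecr_edges Ecc' _ _ _; rewrite -[n in (_ <= n)%N]card_ord max_card.
by apply: leq_trans (leq_bigmax (c i)); apply: leq_trans (leq_bigmax (c' i)); rewrite Ecc'.
Qed.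

Lemma Lambda_subset {p q : F} :
  (forall i c c', (p i c c' <= q i c c')%E) -> forall c, Lambda p c `<=` Lambda q c.
Proof.
move=> le_pq c rho [rho0 [rho_trans [rho_tgt rho_cost]]]; do 3!split=> //.
by move=> i k; apply: le_trans (rho_cost i k) (le_pq _ _ _).
Qed.

Lemma mu_step_le j (lamnext p q : F) :
  (forall i c c', (p i c c' <= q i c c')%E) ->
  forall i c c', (mu_step j lamnext p i c c' <= mu_step j lamnext q i c c')%E.
Proof.
move=> le_pq i c c'; rewrite /mu_step; case: ifP => // _; case: ifP => // _.
case: asboolP => [p_ne0|_]; last by rewrite leNye.
have q_ne0 c2 : trans c c2 -> Lambda q c2 !=set0.
  by move=> /p_ne0[rho /(Lambda_subset le_pq) ?]; exists rho.
rewrite (asboolT q_ne0); apply: le_ereal_inf_tmp => _ [c2 dev_c2 <-].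
apply: ge_ereal_inf; eexists; first by exists c2.
by apply: ereal_sup_le => _ [rho /(Lambda_subset le_pq) Lrho <-]; exists rho.
Qed.

Lemma mu_nonincreasing j (lamnext : F) i c c' :
  nonincreasing_seq (fun k => mu j lamnext k i c c').
Proof.
apply/nonincreasing_seqP => k; elim: k i c c' => [|k IHk] i c c'.
  by rewrite /mu /= /mu_step /mu0; do 2!case: ifP => // _; rewrite leey.
by rewrite /mu !iterS; apply: mu_step_le => *; apply: IHk.
Qed.

Lemma lamstep_le_mu j (lamnext : F) k i c c' :
  (lamstep j lamnext i c c' <= mu j lamnext k i c c')%E.
Proof.
rewrite /lamstep (cvg_lim _ (ereal_nonincreasing_cvgn (mu_nonincreasing _ _ _ _ _))) //.
by apply: ereal_inf_lbound; exists k.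
Qed.

Definition path_to_tgt (v : V) (p : seq V) := path (@is_edge A) v p /\ last v p = tgt.

Definition bounded_by_path_length (lam : F) := forall i c c' p,
  trans c c' -> path_to_tgt (c i) p -> (lam i c c' <= bound (size p))%E.

Lemma mu_le_path_length j (lamnext : F) :
  bounded_by_path_length lamnext ->
  forall k i c c' p, trans c c' -> path_to_tgt (c i) p -> (size p <= k)%N ->
  (mu j lamnext k i c c' <= bound (size p))%E.
Proof.
move=> lamnext_bd; elim=> [|k IHk] i c c' p tcc' [e_p last_p] size_p.
  rewrite /mu /= /mu0; case: ifP => _; first exact: lamnext_bd.
  by case: p size_p last_p {e_p} => //= _ ->; rewrite eqxx.
rewrite /mu iterS /mu_step -/(mu j lamnext k).
case: ifP => _; first exact: lamnext_bd.
case: ifP => [_|/negP ci_ne_tgt]; first by rewrite lee_fin ler0n.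
case: p e_p last_p size_p => [_ /= ci_tgt | w p]; first by rewrite ci_tgt in ci_ne_tgt.
rewrite /= ltnS => /andP[e_cw path_p] last_p size_p.
case: asboolP => _; last by rewrite leNye.
pose c2 : config := [ffun l => if l == i then w else c' l].
have c2i : c2 i = w by rewrite ffunE eqxx.
have dev_c2 : dev i c c' c2.
  split=> [|l /negbTE l_ne_i]; last by rewrite ffunE l_ne_i.
  by apply/forallP => l; rewrite ffunE; case: eqP => [->|_] //; move/forallP: tcc'.
apply: ge_ereal_inf; eexists; first by exists c2.
apply: ge_ereal_sup => _ [rho [rho0 [rho_trans [_ rho_cost]]] <-].
rewrite mulSn natrD EFinD; apply: leeD.
  by rewrite lee_fin ler_nat cost_le_kappa // c2i.
apply: le_trans (rho_cost i 0%N) _; rewrite rho0.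
by apply: IHk => //; [rewrite -rho0 | rewrite c2i].
Qed.

Lemma lamaux_bounded_by_path_length d : bounded_by_path_length (lamaux R d).
Proof.
elim: d => [|d IHd] i c c' p tcc' path_p /=; first by rewrite lee_fin ler0n.
apply: le_trans (lamstep_le_mu _ _ (size p) _ _ _) _.
exact: mu_le_path_length IHd _ _ _ _ _ tcc' path_p (leqnn _).
Qed.

End LambdaBound.

Theorem corollaryC9 (R : realType) (A : arena) (n : nat) :
  wf_arena A ->
  forall (j : nat), (j <= n)%N ->
  forall (i : 'I_n) (c c' : config A n),
    trans c c' -> (j <= ntgt c)%N ->
    (lamstar R j i c c' <= ((#|vert A| * kappa A n)%N%:R)%:E)%E.
Proof.
move=> [edges_wf [_ [_ tgt_reachable]]] j _ i c c' tcc' _.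
have nondecr_edges u v f (e_uv : edge u v = Some f) := (edges_wf u v f e_uv).1.
have [p path_p [last_p /ltnW size_p]] := connect_short_path (tgt_reachable (c i)).
have path_bound := lamaux_bounded_by_path_length R A n nondecr_edges (n - j) i c c' p tcc'.
apply: le_trans (path_bound (conj path_p last_p)) _.
by rewrite lee_fin ler_nat leq_mul2r size_p orbT.
Qed.
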